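(* Let $X$ be a graph on vertex set $V$, $|V|=n$, which may have loops (no multiple edges), with vertex degrees $d_i$ (each loop counted once), and let $\tau$ be the least eigenvalue of its adjacency matrix $A$. Let $S$ be an independent set of size $s\ge1$ containing $s_1$ vertices with loops, and put $\bar d_S=\frac1s\sum_{i\in S}d_i$, $k_S=2\bar d_S-\frac1n\sum_{i\in V}d_i$. If $k_S>\tau$, then \[ s\le n\,\frac{-\tau+\sqrt{\tau^2+4s_1\frac{k_S-\tau}{n}}}{2(k_S-\tau)}. \]
   Context: The adjacency matrix has $A_{ii}=1$ if vertex $i$ carries a loop and $0$ otherwise, and $A_{ij}=1$ for adjacent distinct $i,j$. An independent set is a set of vertices no two distinct members of which are adjacent; looped vertices may belong to it. *)

From HB Require Import structures.
From mathcomp Require Import all_boot all_order all_algebra.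
Set Implicit Arguments. Unset Strict Implicit. Unset Printing Implicit Defensive.
Import Order.TTheory GRing.Theory Num.Theory.
Local Open Scope ring_scope.

(* A graph with possible loops on vertex set 'I_n is a symmetric relation
   e : rel 'I_n; e i i means vertex i carries a loop. *)

Definition adjmx (R : nzRingType) (n : nat) (e : rel 'I_n) : 'M[R]_n :=
  \matrix_(i, j) (e i j)%:R.

Definition deg (n : nat) (e : rel 'I_n) (i : 'I_n) : nat := #|[set j | e i j]|.

Definition independent (n : nat) (e : rel 'I_n) (S : {set 'I_n}) : Prop :=
  forall i j, i \in S -> j \in S -> i != j -> ~~ e i j.

Definition least_eigenvalue (R : realFieldType) (n : nat) (A : 'M[R]_n) (tau : R)
  : Prop := eigenvalue A tau /\ (forall a, eigenvalue A a -> tau <= a).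

From mathcomp Require Import all_boot all_order all_algebra.
From mathcomp Require Import complex ring lra.
Set Implicit Arguments. Unset Strict Implicit. Unset Printing Implicit Defensive.
Import Order.TTheory GRing.Theory Num.Theory.
Local Open Scope ring_scope.
Local Open Scope sesquilinear_scope.

(* Rayleigh's bound tau * (x x^T) <= x A x^T for the least eigenvalue tau of a
   real symmetric A (obtained from the complex spectral theorem) is applied to
   x = 1_S - (s/n) 1.  Independence leaves only the loops of S in 1_S A 1_S^T = s1,
   while 1_S A 1^T and 1 A 1^T are the degree sums over S and over V; expanding
   gives (k - tau) s^2 / n + tau s <= s1, so s lies below the positive root of
   this quadratic. *)

Lemma spectral_diag_eigenvalue (C : numClosedFieldType) n (A : 'M[C]_n) j :
  A \is normalmx -> eigenvalue A (spectral_diag A 0 j).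
Proof.
move=> /orthomx_spectralP A_eq; set P := spectralmx A in A_eq.
have P_unit : P \in unitmx := spectral_unit A.
apply/eigenvalueP; exists (row j P).
  by rewrite [in LHS]A_eq !mulmxA -row_mul mulmxV // -row_mul mul1mx
    row_diag_mx -scalemxAl -rowE.
apply/eqP; rewrite rowE -(mul0mx _ P) => /(row_free_inj _).
rewrite row_free_unit => /(_ P_unit) /matrixP /(_ 0 j).
by rewrite !mxE !eqxx /=; apply/eqP; rewrite oner_eq0.
Qed.

Lemma hermsymmx_form_ge (C : numClosedFieldType) n (A : 'M[C]_n) t :
  A \is hermsymmx -> {in Num.real, forall a, eigenvalue A a -> t <= a} ->
  forall x : 'rV[C]_n, t * (x *m x^t*) 0 0 <= (x *m A *m x^t*) 0 0.
Proof.
move=> A_herm t_le x.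
have /orthomx_spectralP A_eq := hermitian_normalmx A_herm.
set P := spectralmx A in A_eq; set d := spectral_diag A in A_eq.
have P_unitary : P \is unitarymx := spectral_unitarymx A.
have P_unit : P \in unitmx := spectral_unit A.
set y := x *m P^t*.
have Px : P *m x^t* = y^t* by rewrite /y trmx_mul map_mxM trmxCK.
have -> : x *m x^t* = y *m y^t*.
  by rewrite -Px mulmxA /y -(invmx_unitary P_unitary) mulmxKV.
have -> : x *m A *m x^t* = y *m diag_mx d *m y^t*.
  by rewrite -Px A_eq (invmx_unitary P_unitary) !mulmxA.
clearbody y; rewrite !mxE mulr_sumr; apply: ler_sum => j _.
rewrite mul_mx_diag !mxE [X in _ <= X]mulrAC [X in _ <= X]mulrC.
apply: ler_wpM2r; first exact: mul_conjC_ge0.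
apply: t_le; first by move/mxOverP: (hermitian_spectral_diag_real A_herm); apply.
exact/spectral_diag_eigenvalue/hermitian_normalmx.
Qed.

Lemma least_eigenvalue_le_form (R : rcfType) n (A : 'M[R]_n) tau :
  A^T = A -> least_eigenvalue A tau ->
  forall x : 'rV[R]_n, tau * (x *m x^T) 0 0 <= (x *m A *m x^T) 0 0.
Proof.
move=> A_sym [_ tau_min] x.
pose f := real_complex R.
have f_real r : f r \is Num.real by apply/complex_realP; exists r.
have B_herm : map_mx f A \is hermsymmx.
  apply: realsym_hermsym; last by apply/mxOverP => i j; rewrite mxE.
  by apply/is_hermitianmxP; rewrite expr0 scale1r map_mx_id // map_trmx A_sym.
have le_eig : {in Num.real, forall a, eigenvalue (map_mx f A) a -> f tau <= a}.
  by move=> a /complex_realP [r ->]; rewrite eigenvalue_map lecR; apply: tau_min.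
have := hermsymmx_form_ge B_herm le_eig (map_mx f x).
have -> : (map_mx f x)^t* = map_mx f x^T.
  by apply/matrixP => i j; rewrite !mxE conj_Creal.
by rewrite -!map_mxM !mxE -rmorphM lecR.
Qed.

Lemma big_setT (T : finType) (V : Type) (idx : V) (op : V -> V -> V) (F : T -> V) :
  \big[op/idx]_(i in [set: T]) F i = \big[op/idx]_i F i.
Proof. by apply: eq_bigl => i; rewrite in_setT. Qed.

Lemma mxformE (R : comNzRingType) n (A : 'M[R]_n) (y z : 'rV[R]_n) :
  (y *m A *m z^T) 0 0 = \sum_i \sum_j y 0 i * A i j * z 0 j.
Proof.
rewrite mxE exchange_big /=; apply: eq_bigr => j _.
by rewrite !mxE mulr_suml; apply: eq_bigr.
Qed.

Lemma mxform_shift (R : comNzRingType) n (A : 'M[R]_n) (y z : 'rV[R]_n) u :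
  ((y - u *: z) *m A *m (y - u *: z)^T) 0 0 =
  (y *m A *m y^T) 0 0 - u * (y *m A *m z^T) 0 0 - u * (z *m A *m y^T) 0 0
  + u ^+ 2 * (z *m A *m z^T) 0 0.
Proof.
rewrite !mxformE !mulr_sumr -!sumrB -big_split /=; apply: eq_bigr => i _.
rewrite !mulr_sumr -!sumrB -big_split /=; apply: eq_bigr => j _.
by rewrite !mxE; ring.
Qed.

Lemma mxform_trmx (R : comNzRingType) n (A : 'M[R]_n) (y z : 'rV[R]_n) :
  A^T = A -> (z *m A *m y^T) 0 0 = (y *m A *m z^T) 0 0.
Proof.
move=> A_sym; transitivity ((z *m A *m y^T)^T 0 0); first by rewrite [RHS]mxE.
by rewrite !trmx_mul A_sym !trmxK mulmxA.
Qed.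

Definition indicator_row (R : nzSemiRingType) {n} (S : {set 'I_n}) : 'rV[R]_n :=
  \row_i (i \in S)%:R.

Lemma indicator_mxform (R : comNzRingType) n (A : 'M[R]_n) (S T : {set 'I_n}) :
  (indicator_row R S *m A *m (indicator_row R T)^T) 0 0 =
  \sum_(i in S) \sum_(j in T) A i j.
Proof.
rewrite /indicator_row mxformE [RHS]big_mkcond /=; apply: eq_bigr => i _.
rewrite mxE; case: (i \in S); last by rewrite big1 // => j _; rewrite !mul0r.
rewrite [RHS]big_mkcond; apply: eq_bigr => j _.
by rewrite mxE; case: (j \in T); rewrite ?mul1r ?mulr1 ?mulr0.
Qed.

Lemma indicator_dot (R : comNzRingType) n (S T : {set 'I_n}) :
  (indicator_row R S *m (indicator_row R T)^T) 0 0 = #|S :&: T|%:R.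
Proof.
rewrite /indicator_row mxE -sum1_card natr_sum [RHS]big_mkcond /=; apply: eq_bigr => i _.
by rewrite !mxE inE; case: (i \in S); case: (i \in T); rewrite ?mulr1 ?mulr0.
Qed.

Lemma ler_quadratic_root (R : rcfType) (a b c x : R) :
  0 < a -> a * x ^+ 2 + b * x <= c ->
  x <= (- b + Num.sqrt (b ^+ 2 + 4 * c * a)) / (2 * a).
Proof.
move=> a_gt0 le_c.
have sqr_le : (2 * a * x + b) ^+ 2 <= b ^+ 2 + 4 * c * a by nra.
have le_sqrt : 2 * a * x + b <= Num.sqrt (b ^+ 2 + 4 * c * a).
  apply: le_trans (ler_norm _) _.
  by rewrite -sqrtr_sqr ler_sqrt // (le_trans _ sqr_le) ?sqr_ge0.
rewrite ler_pdivlMr ?mulr_gt0 //; lra.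
Qed.

Section AdjacencyMatrix.
Variables (R : comNzRingType) (n : nat) (e : rel 'I_n).

Lemma adjmx_trmx : symmetric e -> (adjmx R e)^T = adjmx R e.
Proof. by move=> e_sym; apply/matrixP => i j; rewrite !mxE e_sym. Qed.

Lemma sum_adjmx_row i : \sum_j adjmx R e i j = (deg e i)%:R.
Proof.
rewrite /deg -sum1_card natr_sum [RHS]big_mkcond /=.
by apply: eq_bigr => j _; rewrite mxE inE; case: (e i j).
Qed.

Lemma adjmx_form_setT (T : {set 'I_n}) :
  (indicator_row R T *m adjmx R e *m (indicator_row R [set: 'I_n])^T) 0 0 =
  \sum_(i in T) (deg e i)%:R.
Proof.
by rewrite indicator_mxform; apply: eq_bigr => i _; rewrite big_setT sum_adjmx_row.
Qed.

Lemma independent_adjmx_form (S : {set 'I_n}) : independent e S ->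
  (indicator_row R S *m adjmx R e *m (indicator_row R S)^T) 0 0 =
  #|[set i in S | e i i]|%:R.
Proof.
move=> S_indep; rewrite indicator_mxform (eq_bigr (fun i => (e i i)%:R)) => [|i iS].
  rewrite -sum1_card natr_sum [LHS]big_mkcond [RHS]big_mkcond /=.
  by apply: eq_bigr => i _; rewrite inE; case: (i \in S); case: (e i i).
rewrite (bigD1 i) //= big1 ?addr0 ?mxE // => j /andP [jS ji].
by rewrite mxE (negbTE (S_indep _ _ iS jS _)) // eq_sym.
Qed.

End AdjacencyMatrix.

Lemma natr_gt0_of_nonempty (R : numDomainType) n (S : {set 'I_n}) :
  (0 < #|S|)%N -> 0 < n%:R :> R.
Proof.
by move=> S_gt0; rewrite ltr0n (leq_trans S_gt0) // -[n in (_ <= n)%N]card_ord max_card.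
Qed.

Section IndependentSet.
Variables (R : rcfType) (n : nat) (e : rel 'I_n) (tau : R) (S : {set 'I_n}).
Hypotheses (e_sym : symmetric e) (tau_least : least_eigenvalue (adjmx R e) tau).
Hypotheses (S_indep : independent e S) (S_gt0 : (0 < #|S|)%N).

Let s : R := (#|S|)%:R.
Let s1 : R := (#|[set i in S | e i i]|)%:R.
Let dbar : R := (\sum_(i in S) (deg e i)%:R) / s.
Let k : R := 2 * dbar - (\sum_(i : 'I_n) (deg e i)%:R) / n%:R.

Lemma independent_set_quadratic_ineq : (k - tau) / n%:R * s ^+ 2 + tau * s <= s1.
Proof.
have n_gt0 : 0 < n%:R :> R := natr_gt0_of_nonempty R S_gt0.
have s_gt0 : 0 < s by rewrite ltr0n.
pose u := s / n%:R.
pose x := indicator_row R S - u *: indicator_row R [set: 'I_n].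
have := least_eigenvalue_le_form (adjmx_trmx R e_sym) tau_least x.
rewrite -{1}(mulmx1 x) !mxform_shift !mulmx1 !indicator_dot.
rewrite (mxform_trmx (indicator_row R S) _ (adjmx_trmx R e_sym)).
rewrite (independent_adjmx_form R S_indep) !adjmx_form_setT big_setT.
rewrite setIid !setIT setTI cardsT card_ord -/s -/s1.
set SD := \sum_(i in S) _; set D := \sum_i _ => le_form.
have -> : (k - tau) / n%:R * s ^+ 2 + tau * s = s1 -
    ((s1 - u * SD - u * SD + u ^+ 2 * D) - tau * (s - u * s - u * s + u ^+ 2 * n%:R)).
  by rewrite /k /dbar -/SD -/D /u; field; rewrite ?gt_eqF.
by rewrite lerBlDr lerDl subr_ge0.
Qed.

End IndependentSet.

Theorem corollary3p4 (R : rcfType) (n : nat) (e : rel 'I_n)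
    (tau : R) (S : {set 'I_n}) :
  symmetric e ->
  least_eigenvalue (adjmx R e) tau ->
  independent e S ->
  (1 <= #|S|)%N ->
  let s : R := (#|S|)%:R in
  let s1 : R := (#|[set i in S | e i i]|)%:R in
  let dbar : R := (\sum_(i in S) (deg e i)%:R) / s in
  let k : R := 2 * dbar - (\sum_(i : 'I_n) (deg e i)%:R) / n%:R in
  k > tau ->
  s <= n%:R * ((- tau + Num.sqrt (tau ^+ 2 + 4 * s1 * ((k - tau) / n%:R)))
               / (2 * (k - tau))).
Proof.
move=> e_sym tau_least S_indep S_gt0 s s1 dbar k tau_lt_k.
have n_gt0 : 0 < n%:R :> R := natr_gt0_of_nonempty R S_gt0.
have a_gt0 : 0 < (k - tau) / n%:R by rewrite divr_gt0 // subr_gt0.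
set num := - tau + _.
have -> : n%:R * (num / (2 * (k - tau))) = num / (2 * ((k - tau) / n%:R)).
  by field; rewrite ?gt_eqF // subr_gt0.
apply: ler_quadratic_root a_gt0 _.
exact: independent_set_quadratic_ineq e_sym tau_least S_indep S_gt0.
Qed.
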